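(* Let $G$ be a subcubic graph with $\mathrm{mad}(G)<\frac{20}{9}$ that has no good coloring, chosen with $|V(G)|+|E(G)|$ minimum among all such graphs. If a vertex $u$ of degree $3$ is adjacent to two $3$-threads, then $u$ is not adjacent to a further $2$-thread.
   Context: Graphs are simple; subcubic means maximum degree at most $3$; $\mathrm{mad}(G)=\max\{2|E(H)|/|V(H)|: H\subseteq G\}$. A $k$-thread is a path on $k$ vertices each of degree $2$ in $G$. A vertex $u$ is adjacent to a $k$-thread if there is a path $ux_1\cdots x_kw$ in $G$ where $x_1,\dots,x_k$ have degree $2$ (so $x_1\cdots x_k$ is a $k$-thread) and $w$ has degree $3$; the threads in the statement go through distinct neighbors of $u$. A $(1^2,2^2)$-packing edge-coloring is an assignment of colors $1_a,1_b,2_a,2_b$ to the edges such that each of the color classes $1_a,1_b$ is a matching and each of $2_a,2_b$ is an induced matching (any two edges of that color are at distance at least $3$ in the line graph). A good coloring is a $(1^2,2^2)$-packing edge-coloring that additionally satisfies: (I) an edge colored $2_a$ and an edge colored $2_b$ never share an endpoint; (II) if $e_1=u_1u_2$ and $e_2=v_1v_2$ share no endpoint and are colored $2_a$ and $2_b$ respectively, then there is no vertex $w$ such that $u_iwv_j$ is a path in $G$ for some $i,j\in\{1,2\}$. *)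

From HB Require Import structures.
From mathcomp Require Import all_boot all_order all_algebra.
Set Warnings "-notation-overridden,-ambiguous-paths".
Set Implicit Arguments. Unset Strict Implicit. Unset Printing Implicit Defensive.
Import Order.TTheory GRing.Theory Num.Theory.

Definition simple_graph (T : finType) (e : rel T) : Prop :=
  symmetric e /\ irreflexive e.

Section Graph.
Variables (T : finType) (e : rel T).

Definition deg (x : T) : nat := #|[set y | e x y]|.

Definition subcubic : Prop := forall x, deg x <= 3.

Definition edges : {set {set T}} :=
  [set [set x; y] | x in T, y in [set y | e x y]].

Definition subgraphs : {set {set T} * {set {set T}}} :=
  [set p : {set T} * {set {set T}} | (p.2 \subset edges) && [forall f in p.2, f \subset p.1]].

(* maximum average degree: max over nonempty subgraphs of 2|E(H)|/|V(H)|
   (0 for the empty graph) *)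
Definition mad : rat :=
  \big[Num.max/0%R]_(p in subgraphs | p.1 != set0)
     ((2 * #|p.2|)%:R / #|p.1|%:R)%R.

Inductive color := C1a | C1b | C2a | C2b.

(* an edge coloring assigns a color to each unordered pair; edge uv gets c [set u; v] *)
Definition is_matching_col (c : {set T} -> color) (k : color) : Prop :=
  forall u v w, e u v -> e u w -> v != w ->
    c [set u; v] = k -> c [set u; w] <> k.

(* induced matching: two distinct edges of color k are at distance >= 3 in the
   line graph: they share no endpoint and no edge joins them *)
Definition is_induced_matching_col (c : {set T} -> color) (k : color) : Prop :=
  forall u1 u2 v1 v2, e u1 u2 -> e v1 v2 ->
    [set u1; u2] != [set v1; v2] ->
    c [set u1; u2] = k -> c [set v1; v2] = k ->
    u1 != v1 /\ ~~ e u1 v1.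

Definition packing_coloring (c : {set T} -> color) : Prop :=
  [/\ is_matching_col c C1a, is_matching_col c C1b,
      is_induced_matching_col c C2a & is_induced_matching_col c C2b].

Definition good_coloring (c : {set T} -> color) : Prop :=
  [/\ packing_coloring c,
      (forall u v w, e u v -> e u w ->
         c [set u; v] = C2a -> c [set u; w] <> C2b) &
      (forall u1 u2 v1 v2 w, e u1 u2 -> e v1 v2 ->
         c [set u1; u2] = C2a -> c [set v1; v2] = C2b ->
         u1 != v1 -> u1 != v2 -> u2 != v1 -> u2 != v2 ->
         ~ (e u1 w /\ e w v1))].

Definition has_good_coloring : Prop := exists c, good_coloring c.

Definition adj_thread (u : T) (k : nat) (x : T) : Prop :=
  exists (p : seq T) (w : T),
    [/\ size p = k, x = head w p, path e u (rcons p w),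
        uniq (u :: rcons p w) & all (fun y => deg y == 2) p /\ deg w = 3].

End Graph.

From HB Require Import structures.
From mathcomp Require Import all_boot all_order all_algebra.
Set Implicit Arguments. Unset Strict Implicit. Unset Printing Implicit Defensive.
Import Order.TTheory GRing.Theory Num.Theory.

(* Write the configuration as the vertex u with the threads u x1 a1 b1 w1, u x2 a2 b2 w2
   and u x3 a3 w3.  Deleting the eight edges at u, x1, x2, x3, a1, a2 gives a graph with
   the same vertices, fewer edges and no larger mad, so by minimality it has a good coloring,
   in which b1 w1, b2 w2 and a3 w3 are pendant edges.  Swapping 1a/1b along the Kempe chain
   of a3 w3 (a path, so it cannot reach both b1 w1 and b2 w2), or 2a/2b along that of a3 w3,
   removes the two color patterns on these pendant edges that block an extension; in all
   remaining cases a direct choice of colors for the eight deleted edges gives a good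
   coloring of the whole graph. *)

(** * Colors and good colorings *)

Definition color_eqb (a b : color) : bool :=
  match a, b with
  | C1a, C1a | C1b, C1b | C2a, C2a | C2b, C2b => true
  | _, _ => false
  end.

Lemma color_eqP : Equality.axiom color_eqb.
Proof. by do 2 case; constructor. Qed.

HB.instance Definition _ := hasDecEq.Build color color_eqP.

Definition is1 (k : color) := (k == C1a) || (k == C1b).
Definition is2 (k : color) := (k == C2a) || (k == C2b).
Definition flip1 (k : color) := match k with C1a => C1b | C1b => C1a | k => k end.
Definition flip2 (k : color) := match k with C2a => C2b | C2b => C2a | k => k end.

Lemma flip1K : involutive flip1. Proof. by case. Qed.
Lemma flip2K : involutive flip2. Proof. by case. Qed.

Lemma is1_flip1 k : is1 (flip1 k) = is1 k. Proof. by case: k. Qed.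
Lemma is2_flip2 k : is2 (flip2 k) = is2 k. Proof. by case: k. Qed.
Lemma is1_is2F k : is1 k -> is2 k = false. Proof. by case: k. Qed.

Lemma eq_set2 (T : finType) (a b c d : T) :
  ([set a; b] == [set c; d]) = (a == c) && (b == d) || (a == d) && (b == c).
Proof.
rewrite eqEsubset !subUset !sub1set !inE.
case: (eqVneq a c) => [E1|ac]; case: (eqVneq a d) => [E2|ad];
  case: (eqVneq b c) => [E3|bc]; case: (eqVneq b d) => [E4|bd]; subst;
  by rewrite ?eqxx ?orbT ?orbF ?andbT ?andbF // 1?eq_sym ?(negbTE ac) ?(negbTE ad)
    ?(negbTE bc) ?(negbTE bd) ?andbF.
Qed.

Lemma set2_eq_cases (T : finType) (a b c d : T) :
  [set a; b] = [set c; d] -> (a = c /\ b = d) \/ (a = d /\ b = c).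
Proof. by move/eqP; rewrite eq_set2 => /orP[] /andP[/eqP-> /eqP->]; [left | right]. Qed.

Lemma is2_neq_cases a b : is2 a -> is2 b -> a != b ->
  (a = C2a /\ b = C2b) \/ (a = C2b /\ b = C2a).
Proof. by case: a; case: b; auto. Qed.

Section GoodColorings.
Variables (T : finType) (g : rel T).
Hypothesis gsym : symmetric g.

Definition within2 (x y : T) := [|| x == y, g x y | [exists w, g x w && g w y]].

Lemma within2_sym : symmetric within2.
Proof.
move=> x y; rewrite /within2 eq_sym gsym; congr [|| _, _ | _].
by apply/existsP/existsP => -[w /andP[xw wy]]; exists w; rewrite gsym wy gsym xw.
Qed.

Lemma good1_neq c x y z : good_coloring g c -> g x y -> g x z -> y != z ->
  is1 (c [set x; y]) -> c [set x; y] != c [set x; z].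
Proof.
case=> -[m1a m1b _ _] _ _ gxy gxz yz; apply: contraTneq => E.
by rewrite /is1; apply/norP; split; apply/eqP => Ek;
  [apply: (m1a x y z) | apply: (m1b x y z)]; rewrite -?E.
Qed.

Lemma good_avoid2 c x : good_coloring g c ->
  exists2 z, is2 z & forall y, g x y -> c [set x; y] != flip2 z.
Proof.
case=> _ hI _.
have [/existsP[y0 /andP[gy0 /eqP cy0]]|none] := boolP [exists y, g x y && (c [set x; y] == C2a)].
  by exists C2a => // y gy; apply/eqP; apply: hI gy0 gy cy0.
exists C2b => // y gy; apply: contra none => /eqP cy.
by apply/existsP; exists y; rewrite gy cy.
Qed.

Definition flip_on (flip : color -> color) (K : pred {set T}) c f :=
  if f \in K then flip (c f) else c f.

Lemma flip_on_eq flip K c f h : injective flip -> (f \in K) = (h \in K) ->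
  (flip_on flip K c f == flip_on flip K c h) = (c f == c h).
Proof.
by move=> flip_inj; rewrite /flip_on => ->; case: (h \in K); rewrite ?(inj_eq flip_inj).
Qed.

Variables (c : {set T} -> color) (K : pred {set T}).
Hypothesis cgood : good_coloring g c.

Lemma flip1_good :
  (forall x y z, g x y -> g x z -> y != z -> is1 (c [set x; y]) -> is1 (c [set x; z]) ->
     ([set x; y] \in K) = ([set x; z] \in K)) ->
  good_coloring g (flip_on flip1 K c).
Proof.
move=> closedK; have [[_ _ i2a i2b] hI hII] := cgood; set c' := flip_on flip1 K c.
have is1E f : is1 (c' f) = is1 (c f).
  by rewrite /c' /flip_on; case: (f \in K); rewrite ?is1_flip1.
have keep2 f k : c' f = k -> is2 k -> c f = k.
  by rewrite /c' /flip_on; case: (f \in K) => <-; case: (c f).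
have match1 k : is1 k -> is_matching_col g c' k.
  move=> k1 x y z gxy gxz yz Hy Hz.
  have [i1 i2] : is1 (c [set x; y]) /\ is1 (c [set x; z]) by rewrite -!is1E Hy Hz.
  have := good1_neq cgood gxy gxz yz i1.
  by rewrite -(@flip_on_eq flip1 K c _ _ (can_inj flip1K) (closedK _ _ _ gxy gxz yz i1 i2)) -/c'
    Hy Hz eqxx.
split; first split.
- exact: match1.
- exact: match1.
- by move=> u1 u2 v1 v2 g1 g2 ne /keep2 H1 /keep2 H2; apply: i2a g1 g2 ne (H1 _) (H2 _).
- by move=> u1 u2 v1 v2 g1 g2 ne /keep2 H1 /keep2 H2; apply: i2b g1 g2 ne (H1 _) (H2 _).
- by move=> x y z gxy gxz /keep2 H1 /keep2 H2; apply: hI gxy gxz (H1 _) (H2 _).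
- by move=> u1 u2 v1 v2 w g1 g2 /keep2 H1 /keep2 H2; apply: hII g1 g2 (H1 _) (H2 _).
Qed.

Lemma flip2_good :
  (forall u1 u2 v1 v2, g u1 u2 -> g v1 v2 ->
     is2 (c [set u1; u2]) -> is2 (c [set v1; v2]) -> within2 u1 v1 ->
     ([set u1; u2] \in K) = ([set v1; v2] \in K)) ->
  good_coloring g (flip_on flip2 K c).
Proof.
move=> closedK; have [[m1a m1b i2a i2b] hI hII] := cgood; set c' := flip_on flip2 K c.
have is2E f : is2 (c' f) = is2 (c f).
  by rewrite /c' /flip_on; case: (f \in K); rewrite ?is2_flip2.
have keep1 f k : c' f = k -> is1 k -> c f = k.
  by rewrite /c' /flip_on; case: (f \in K) => <-; case: (c f).
have same u1 u2 v1 v2 : g u1 u2 -> g v1 v2 -> within2 u1 v1 ->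
    is2 (c' [set u1; u2]) -> is2 (c' [set v1; v2]) ->
    (c' [set u1; u2] == c' [set v1; v2]) = (c [set u1; u2] == c [set v1; v2]).
  rewrite !is2E => g1 g2 near i1 i2.
  exact: flip_on_eq (can_inj flip2K) (closedK _ _ _ _ g1 g2 i1 i2 near).
have induced k : is2 k -> is_induced_matching_col g c' k.
  move=> k2 u1 u2 v1 v2 g1 g2 ne H1 H2.
  have [near|] := boolP (within2 u1 v1); last by rewrite /within2 !negb_or => /and3P[].
  have /eqP E : c [set u1; u2] == c [set v1; v2] by rewrite -same ?H1 ?H2.
  have := k2; rewrite -H1 is2E /is2 => /orP[] /eqP E1.
    exact: i2a g1 g2 ne E1 (etrans (esym E) E1).
  exact: i2b g1 g2 ne E1 (etrans (esym E) E1).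
have opposite u1 u2 v1 v2 : g u1 u2 -> g v1 v2 -> within2 u1 v1 ->
    c' [set u1; u2] = C2a -> c' [set v1; v2] = C2b ->
    (c [set u1; u2] = C2a /\ c [set v1; v2] = C2b) \/
    (c [set u1; u2] = C2b /\ c [set v1; v2] = C2a).
  move=> g1 g2 near H1 H2; apply: is2_neq_cases; rewrite -?is2E ?H1 ?H2 //.
  by rewrite -(same _ _ _ _ g1 g2 near) ?H1 ?H2.
split; first split.
- by move=> x y z gxy gxz yz /keep1 H1 /keep1 H2; apply: m1a gxy gxz yz (H1 _) (H2 _).
- by move=> x y z gxy gxz yz /keep1 H1 /keep1 H2; apply: m1b gxy gxz yz (H1 _) (H2 _).
- exact: induced.
- exact: induced.
- move=> x y z gxy gxz H1 H2.
  have near : within2 x x by rewrite /within2 eqxx.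
  case: (opposite _ _ _ _ gxy gxz near H1 H2) => -[E1 E2]; first exact: hI gxy gxz E1 E2.
  exact: hI gxz gxy E2 E1.
- move=> u1 u2 v1 v2 w g1 g2 H1 H2 n11 n12 n21 n22 [gw1 gw2].
  have near : within2 u1 v1.
    by rewrite /within2; apply/or3P; constructor 3; apply/existsP; exists w; rewrite gw1.
  case: (opposite _ _ _ _ g1 g2 near H1 H2) => -[E1 E2].
    exact: hII g1 g2 E1 E2 n11 n12 n21 n22 (conj gw1 gw2).
  apply: (hII _ _ _ _ w g2 g1 E2 E1); rewrite 1?eq_sym //.
  by rewrite gsym gw2 gsym gw1.
Qed.

End GoodColorings.

(** * Kempe chains *)

Section Leaves.
Variables (X : finType) (R : rel X).
Hypothesis Rsym : symmetric R.
Hypothesis R_deg2 : forall x y1 y2 y3, R x y1 -> R x y2 -> R x y3 ->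
  [\/ y1 = y2, y1 = y3 | y2 = y3].

Definition leaf x := forall y1 y2, R x y1 -> R x y2 -> y1 = y2.

Lemma path_crossing (S : pred X) x p : path R x p -> x \notin S -> last x p \in S ->
  exists y z, [/\ y \notin S, z \in S & R y z].
Proof.
elim: p x => [|z p IHp] x /=; first by move=> _ /negP.
case/andP=> Rxz pz xS; have [zS _|] := boolP (z \in S); first by exists x, z.
exact: IHp.
Qed.

Lemma uniq_path_split a p1 z p2 :
  path R a (p1 ++ z :: p2) -> uniq (a :: p1 ++ z :: p2) ->
  [/\ R (last a p1) z, last a p1 \in a :: p1 &
      forall s p2', p2 = s :: p2' -> [/\ R z s, last a p1 != s & s \in z :: p2]].
Proof.
rewrite cat_path -cat_cons cat_uniq /= => /and3P[_ Rz pz] /and3P[_ hs _].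
have ml := mem_last a p1; split=> // s p2' E; move: pz hs; rewrite E /= => /andP[Rzs _] hs.
rewrite !inE eqxx orbT; split=> //; apply: contraNneq hs => <-.
by rewrite ml orbT.
Qed.

Lemma three_leaves_disconnected a b c : leaf a -> leaf b -> leaf c ->
  a != b -> a != c -> b != c -> connect R a b -> connect R a c -> False.
Proof.
move=> la lb lc ab ac bc /connectP[p0 pth0 Eb]; subst b.
move: lb ab bc; case/shortenP: pth0 => p pth up _ lb ab bc Hac.
have cS : c \notin a :: p.
  rewrite inE negb_or eq_sym ac /=; apply/negP => cp.
  case/splitPr: cp pth up bc => p1 p2 pth up bc.
  have [R1 _ F] := uniq_path_split pth up.
  case: p2 pth up bc F => [|s p2'] pth up bc F; first by rewrite last_cat eqxx in bc.
  have [R2 ne2 _] := F s p2' erefl.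
  by rewrite (lc _ _ (etrans (Rsym _ _) R1) R2) eqxx in ne2.
have [y [z [yS zS Ryz]]] : exists y z, [/\ y \notin a :: p, z \in a :: p & R y z].
  have /connectP[q pq Ea] : connect R c a by rewrite (sym_connect_sym Rsym).
  by apply: (path_crossing (S := mem (a :: p)) pq cS); rewrite -Ea mem_head.
move: zS; rewrite inE => /orP[/eqP Ez|zp].
  subst z; case: p pth up lb ab bc cS yS => [|s p'] pth up lb ab bc cS yS.
    by rewrite eqxx in ab.
  case/andP: pth => Ras _.
  by move: yS; rewrite (la _ _ (etrans (Rsym _ _) Ryz) Ras) !inE eqxx orbT.
case/splitPr: zp pth up lb ab bc cS yS => p1 p2 pth up lb ab bc cS yS.
have [R1 m1 F] := uniq_path_split pth up.
have yp : y != last a p1 by apply: contraNneq yS => ->; rewrite -cat_cons mem_cat m1.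
case: p2 pth up lb ab bc cS yS F => [|s p2'] pth up lb ab bc cS yS F.
  move: lb; rewrite last_cat /= => lb.
  by rewrite (lb _ _ (etrans (Rsym _ _) R1) (etrans (Rsym _ _) Ryz)) eqxx in yp.
have [R2 ne2 s2] := F s p2' erefl.
have ys : y != s by apply: contraNneq yS => ->; rewrite -cat_cons mem_cat s2 orbT.
by case: (R_deg2 (etrans (Rsym _ _) R1) R2 (etrans (Rsym _ _) Ryz)) => E;
  [rewrite E eqxx in ne2 | rewrite E eqxx in yp | rewrite E eqxx in ys].
Qed.

End Leaves.

Section KempeChains.
Variables (T : finType) (g : rel T).
Hypotheses (gsym : symmetric g) (girr : irreflexive g).
Variable c : {set T} -> color.
Hypothesis cgood : good_coloring g c.

Definition is_edge (f : {set T}) := [exists x, exists y, g x y && (f == [set x; y])].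

Lemma is_edge_set2 x y : g x y -> is_edge [set x; y].
Proof. by move=> gxy; apply/existsP; exists x; apply/existsP; exists y; rewrite gxy eqxx. Qed.

Lemma is_edge_at f x : is_edge f -> x \in f -> exists2 y, g x y & f = [set x; y].
Proof.
case/existsP=> a /existsP[b /andP[gab /eqP->]].
by rewrite !inE => /orP[] /eqP->; [exists b | exists a; rewrite 1?gsym 1?setUC].
Qed.

Lemma no_three_is1_at x f1 f2 f3 : is_edge f1 -> is_edge f2 -> is_edge f3 ->
  x \in f1 -> x \in f2 -> x \in f3 -> f1 != f2 -> f1 != f3 -> f2 != f3 ->
  is1 (c f1) -> is1 (c f2) -> is1 (c f3) -> False.
Proof.
move=> /is_edge_at E1 /is_edge_at E2 /is_edge_at E3 /E1[y1 g1 ->] /E2[y2 g2 ->] /E3[y3 g3 ->].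
have neq y z : [set x; y] != [set x; z] -> y != z by apply: contraNneq => ->.
move=> n12 n13 n23 i1 i2 i3.
have := good1_neq cgood g1 g2 (neq _ _ n12) i1; have := good1_neq cgood g1 g3 (neq _ _ n13) i1.
have := good1_neq cgood g2 g3 (neq _ _ n23) i2; move: i1 i2 i3; rewrite /is1.
by case: (c [set x; y1]); case: (c [set x; y2]); case: (c [set x; y3]).
Qed.

Definition kempe1 (f h : {set T}) :=
  [&& f != h, is_edge f, is_edge h, is1 (c f), is1 (c h) & [exists x, (x \in f) && (x \in h)]].

Lemma kempe1_sym : symmetric kempe1.
Proof.
move=> f h; rewrite /kempe1 eq_sym; do 4 bool_congr; congr (_ && _).
by apply/existsP/existsP => -[x /andP[xf xh]]; exists x; rewrite xf xh.
Qed.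

Lemma kempe1_share x f hi hj : kempe1 f hi -> kempe1 f hj ->
  x \in f -> x \in hi -> x \in hj -> hi = hj.
Proof.
case/and5P=> ni ef ei cf /andP[ci _] /and5P[nj _ ej _ /andP[cj _]] xf xi xj.
have [//|nij] := eqVneq hi hj.
by case: (no_three_is1_at ef ei ej xf xi xj ni nj nij cf ci cj).
Qed.

Lemma kempe1_deg2 f h1 h2 h3 : kempe1 f h1 -> kempe1 f h2 -> kempe1 f h3 ->
  [\/ h1 = h2, h1 = h3 | h2 = h3].
Proof.
move=> K1 K2 K3; have /and3P[_ /existsP[a /existsP[b /andP[_ /eqP Ef]]] _] := K1.
move: (K1) (K2) (K3) => /and5P[_ _ _ _ /andP[_ /existsP[z1 /andP[z1f z1h]]]].
move=> /and5P[_ _ _ _ /andP[_ /existsP[z2 /andP[z2f z2h]]]].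
move=> /and5P[_ _ _ _ /andP[_ /existsP[z3 /andP[z3f z3h]]]].
have endpoint z : z \in f -> (z = a) \/ (z = b) by rewrite Ef !inE => /orP[] /eqP; auto.
case: (endpoint _ z1f) (endpoint _ z2f) (endpoint _ z3f) => [] E1 [] E2 [] E3; subst z1 z2 z3;
  by [constructor 1; apply: (@kempe1_share a f) | constructor 1; apply: (@kempe1_share b f)
     | constructor 2; apply: (@kempe1_share a f) | constructor 2; apply: (@kempe1_share b f)
     | constructor 3; apply: (@kempe1_share a f) | constructor 3; apply: (@kempe1_share b f)].
Qed.

Lemma kempe1_leaf b w : g b w -> (forall y, g b y -> y = w) -> leaf kempe1 [set b; w].
Proof.
move=> gbw bw; have wf : w \in [set b; w] by rewrite !inE eqxx orbT.
have atw h : kempe1 [set b; w] h -> w \in h.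
  case/and5P=> n _ eh _ /andP[_ /existsP[x /andP[]]].
  rewrite !inE => /orP[] /eqP-> // /(is_edge_at eh)[y /bw-> Eh].
  by rewrite Eh eqxx in n.
by move=> h1 h2 K1 K2; apply: (kempe1_share K1 K2 wf); apply: atw.
Qed.

Lemma kempe1_closed f0 x y z : g x y -> g x z -> y != z ->
  is1 (c [set x; y]) -> is1 (c [set x; z]) ->
  connect kempe1 f0 [set x; y] = connect kempe1 f0 [set x; z].
Proof.
move=> gxy gxz yz i1 i2.
have K : kempe1 [set x; y] [set x; z].
  rewrite /kempe1 !is_edge_set2 // i1 i2 /=; apply/andP; split.
    apply: contraNneq yz => E; have : z \in [set x; y] by rewrite E !inE eqxx orbT.
    by rewrite !inE => /orP[] /eqP E'; [rewrite -E' girr in gxz | rewrite E'].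
  by apply/existsP; exists x; rewrite !inE !eqxx.
apply/idP/idP => H; first exact: connect_trans H (connect1 K).
by apply: connect_trans H (connect1 _); rewrite kempe1_sym.
Qed.

Lemma within2_2a2bF f h x y : is_edge f -> is_edge h -> x \in f -> y \in h ->
  within2 g x y -> c f = C2a -> c h = C2b -> False.
Proof.
move=> ef eh xf yh near ca cb; have [_ hI hII] := cgood.
have [[z /andP[zf zh]]|] := altP (@existsP _ (fun z => (z \in f) && (z \in h))).
  have [p gp Ef] := is_edge_at ef zf; have [q gq Eh] := is_edge_at eh zh.
  by rewrite Ef in ca; rewrite Eh in cb; apply: hI gp gq ca cb.
move=> disj; have ne a b : a \in f -> b \in h -> a != b.
  by move=> af bh; apply: contraNneq disj => Eab; apply/existsP; exists a; rewrite af Eab.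
have [x' gx Ef] := is_edge_at ef xf; have [y' gy Eh] := is_edge_at eh yh.
have x'f : x' \in f by rewrite Ef !inE eqxx orbT.
have y'h : y' \in h by rewrite Eh !inE eqxx orbT.
case/or3P: near => [/eqP Exy|gxy|/existsP[w /andP[gxw gwy]]].
- by rewrite Exy in xf; move: (ne _ _ xf yh); rewrite eqxx.
- rewrite Ef setUC in ca; rewrite Eh in cb.
  apply: (hII x' x y y' x _ gy ca cb); rewrite ?ne //; first by rewrite gsym.
  by rewrite gsym gx.
- rewrite Ef in ca; rewrite Eh in cb.
  by apply: (hII x x' y y' w gx gy ca cb); rewrite ?ne.
Qed.

Definition kempe2 (f h : {set T}) :=
  [&& is_edge f, is_edge h, is2 (c f), is2 (c h) &
      [exists x, exists y, [&& x \in f, y \in h & within2 g x y]]].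

Lemma kempe2_sym : symmetric kempe2.
Proof.
move=> f h; rewrite /kempe2 andbCA (andbCA (is2 (c f))); do 4 bool_congr.
apply/existsP/existsP => -[x /existsP[y /and3P[xf yh near]]];
  by exists y; apply/existsP; exists x; rewrite xf yh (within2_sym gsym).
Qed.

Lemma kempe2_same f h : kempe2 f h -> c f = c h.
Proof.
case/and5P=> ef eh cf ch /existsP[x /existsP[y /and3P[xf yh near]]].
move: cf ch; rewrite /is2; case Ef: (c f); case Eh: (c h) => // _ _.
  by case: (within2_2a2bF ef eh xf yh near Ef Eh).
by rewrite (within2_sym gsym) in near; case: (within2_2a2bF eh ef yh xf near Eh Ef).
Qed.

Lemma connect_kempe2_same f0 f : connect kempe2 f0 f -> c f = c f0.
Proof.
case/connectP=> p; elim: p f0 => [|h p IHp] f0 /=; first by move=> _ ->.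
by case/andP=> K pp E; rewrite (IHp h pp E) (kempe2_same K).
Qed.

Lemma kempe2_closed f0 u1 u2 v1 v2 : g u1 u2 -> g v1 v2 ->
  is2 (c [set u1; u2]) -> is2 (c [set v1; v2]) -> within2 g u1 v1 ->
  connect kempe2 f0 [set u1; u2] = connect kempe2 f0 [set v1; v2].
Proof.
move=> g1 g2 i1 i2 near.
have K : kempe2 [set u1; u2] [set v1; v2].
  rewrite /kempe2 !is_edge_set2 // i1 i2 /=.
  by apply/existsP; exists u1; apply/existsP; exists v1; rewrite !inE !eqxx.
apply/idP/idP => H; first exact: connect_trans H (connect1 K).
by apply: connect_trans H (connect1 _); rewrite kempe2_sym.
Qed.

End KempeChains.

(** * Subgraphs and threads *)

Section Subgraph.
Variables (T : finType) (g e : rel T).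
Hypothesis ge : subrel g e.

Lemma subrel_deg x : deg g x <= deg e x.
Proof. by apply: subset_leq_card; apply/subsetP => y; rewrite !inE => /ge. Qed.

Lemma subrel_subcubic : subcubic e -> subcubic g.
Proof. by move=> sc x; apply: leq_trans (subrel_deg x) (sc x). Qed.

Lemma subrel_edges : edges g \subset edges e.
Proof.
apply/subsetP => f /imset2P[x y _]; rewrite inE => /ge gxy ->.
by apply/imset2P; exists x y; rewrite ?inE.
Qed.

Lemma subrel_edges_proper x y : e x y -> ~~ g x y -> ~~ g y x -> edges g \proper edges e.
Proof.
move=> exy ngxy ngyx; rewrite properE subrel_edges /=; apply/subsetPn; exists [set x; y].
  by apply/imset2P; exists x y; rewrite ?inE.
apply/imset2P => -[a b _]; rewrite inE => gab /eqP; rewrite eq_set2.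
by case/orP=> /andP[/eqP Ea /eqP Eb]; subst a b; rewrite gab in ngxy ngyx.
Qed.

Lemma subrel_mad : (mad g <= mad e)%R.
Proof.
apply: subset_bigmax; apply/subsetP => p; rewrite !inE => /andP[s1 ->].
by rewrite (subset_trans s1 subrel_edges).
Qed.

End Subgraph.

Section Threads.
Variables (T : finType) (e : rel T).
Hypothesis sym_e : symmetric e.

Lemma adj_nbrs x S y : [set z | e x z] = S -> e x y = (y \in S).
Proof. by move=> <-; rewrite inE. Qed.

Lemma deg2_nbrs x a b : deg e x = 2 -> e x a -> e x b -> a != b -> [set y | e x y] = [set a; b].
Proof.
move=> dx xa xb ab; apply/esym/eqP; rewrite eqEcard cards2 ab -[#|_|]/(deg e x) dx andbT.
by rewrite subUset !sub1set !inE xa xb.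
Qed.

Lemma deg3_nbrs x a b c : deg e x = 3 -> e x a -> e x b -> e x c ->
  a != b -> a != c -> b != c -> [set y | e x y] = [set a; b; c].
Proof.
move=> dx xa xb xc ab ac bc; apply/esym/eqP.
rewrite eqEcard -setUA cardsU1 cards2 !inE negb_or ab ac bc -[#|_|]/(deg e x) dx andbT.
by rewrite !subUset !sub1set !inE xa xb xc.
Qed.

Definition thread u p w :=
  [/\ path e u (rcons p w), uniq (u :: rcons p w), all (fun y => deg e y == 2) p & deg e w = 3].

Lemma thread_uniq u p w : thread u p w -> uniq (u :: p).
Proof.
by case=> _ + _ _; rewrite /= mem_rcons rcons_uniq inE negb_or => /and3P[/andP[_ ->] _ ->].
Qed.

Lemma thread_neq_end u p w : thread u p w -> u != w.
Proof. by case=> _ /andP[+ _] _ _; rewrite mem_rcons inE negb_or => /andP[]. Qed.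

Lemma thread_end_notin u p w q w' : thread u p w -> thread u q w' -> w \notin q.
Proof.
by case=> _ _ _ dw [_ _ /allP dq _]; apply/negP => /dq; rewrite dw.
Qed.

Lemma thread_nbrs u p1 t p2 w : thread u (p1 ++ t :: p2) w ->
  [set y | e t y] = [set last u p1; head w p2].
Proof.
case; rewrite rcons_cat cat_path -cat_cons cat_uniq all_cat /=.
move=> /and3P[_ Rt pt] /and3P[_ disj _] /and3P[_ /eqP dt _] _.
have tw : e t (head w p2) by move: pt; case: (p2) => [|s ?] /= /andP[].
apply: deg2_nbrs; rewrite // 1?sym_e //; apply: contraNneq disj => E.
apply/orP; right; apply/hasP; exists (head w p2); last by rewrite -E mem_last.
by case: (p2) => [|s ?]; rewrite /= ?mem_rcons !inE eqxx ?orbT.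
Qed.

Lemma thread_nbrs_sub u p w t s : thread u p w -> t \in p -> e t s -> s \in u :: rcons p w.
Proof.
move=> th tp; case/splitPr: tp th => p1 p2 th; rewrite (adj_nbrs _ (thread_nbrs th)) in_set2.
rewrite inE rcons_cat mem_cat orbA; case/orP=> /eqP->.
  by move: (mem_last u p1); rewrite inE => ->.
by rewrite rcons_cons; case: (p2) => [|? ?]; rewrite /= !inE eqxx ?orbT.
Qed.

Lemma thread_root u p w t : thread u p w -> t \in p -> e u t -> t = head w p.
Proof.
move=> th tp; case/splitPr: tp th => p1 p2 th.
rewrite sym_e (adj_nbrs _ (thread_nbrs th)) in_set2.
case: (th) => _ /andP[+ _] _ _; rewrite rcons_cat mem_cat negb_or => /andP[up1 up2].
case/orP=> /eqP Eu.
  by case: p1 up1 Eu {th} => //= s p1 up1 Eu; rewrite Eu mem_last in up1.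
move: up2; rewrite Eu rcons_cons inE negb_or => /andP[_].
by case: (p2) => [|? ?]; rewrite /= ?mem_rcons !inE eqxx ?orbT.
Qed.

Lemma path_avoid (A B : seq T) x p :
  (forall t s, t \in A -> e t s -> s \in B) ->
  (forall y, y \in x :: p -> y \in B -> y \in A) ->
  path e x p -> x \notin A -> all (fun y => y \notin A) (x :: p).
Proof.
elim: p x => [|y p IHp] x closedA BA; first by rewrite /= andbT.
case/andP=> xy pth xA; rewrite /= xA; apply: (IHp y) => // [z zp|].
  by apply: BA; rewrite inE zp orbT.
apply: contra xA => yA; apply: BA; first exact: mem_head.
by apply: closedA yA _; rewrite sym_e.
Qed.

(* A path starting outside q can enter q only from q itself, from u or from w'. *)
Lemma threads_disjoint u p w q w' : thread u p w -> thread u q w' ->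
  head w p != head w' q -> ~~ has (mem q) p.
Proof.
rewrite -all_predC; case: p => [//|x p] thp thq hx.
case: (thp) => /= /andP[ux]; rewrite rcons_path => /andP[pth _] _ _ _.
have xq : x \notin q by apply: contra hx => xq; rewrite (thread_root thq xq ux).
apply: (path_avoid (B := u :: rcons q w') _ _ pth xq).
  by move=> t s tq ts; apply: thread_nbrs_sub thq tq ts.
move=> y yp; rewrite inE mem_rcons inE => /or3P[/eqP Eu|/eqP Ew|//].
  by have := thread_uniq thp; rewrite -Eu /= yp.
by move: yp; rewrite Ew (negbTE (thread_end_notin thq thp)).
Qed.

Lemma threads_uniq u p1 w1 p2 w2 p3 w3 :
  thread u p1 w1 -> thread u p2 w2 -> thread u p3 w3 -> head w1 p1 != head w2 p2 ->
  head w1 p1 != head w3 p3 -> head w2 p2 != head w3 p3 -> uniq (u :: p1 ++ p2 ++ p3).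
Proof.
move=> th1 th2 th3 h12 h13 h23.
rewrite cons_uniq !mem_cat !negb_or !cat_uniq has_cat negb_or.
rewrite (threads_disjoint th2 th1) 1?eq_sym // (threads_disjoint th3 th1) 1?eq_sym //.
rewrite (threads_disjoint th3 th2) 1?eq_sym //.
move: (thread_uniq th1) (thread_uniq th2) (thread_uniq th3); rewrite !cons_uniq.
by move=> /andP[-> ->] /andP[-> ->] /andP[-> ->].
Qed.

Lemma thread_end_notin_threads u p w p1 w1 p2 w2 p3 w3 : thread u p w ->
  thread u p1 w1 -> thread u p2 w2 -> thread u p3 w3 -> w \notin u :: p1 ++ p2 ++ p3.
Proof.
move=> th th1 th2 th3; rewrite in_cons !mem_cat !negb_or eq_sym (thread_neq_end th).
by rewrite (thread_end_notin th th1) (thread_end_notin th th2) (thread_end_notin th th3).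
Qed.

Lemma adj_thread3 u x : adj_thread e u 3 x -> exists a b w, thread u [:: x; a; b] w.
Proof.
case=> p [w [sz -> pth un [ds dw]]].
by case: p sz pth un ds => [|y [|a [|b [|? ?]]]] //= _ *; exists a, b, w.
Qed.

Lemma adj_thread2 u x : adj_thread e u 2 x -> exists a w, thread u [:: x; a] w.
Proof.
case=> p [w [sz -> pth un [ds dw]]].
by case: p sz pth un ds => [|y [|a [|? ?]]] //= _ *; exists a, w.
Qed.

End Threads.

(** * The reducible configuration *)

Inductive vlabel := U | X1 | X2 | X3 | A1 | A2 | B1 | B2 | A3.

(* The position of a label in [vlabels]. *)
Definition vlabel_code (i : vlabel) : nat :=
  match i with
  | U => 0 | X1 => 1 | A1 => 2 | B1 => 3 | X2 => 4 | A2 => 5 | B2 => 6 | X3 => 7 | A3 => 8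
  end.

Lemma vlabel_code_inj : injective vlabel_code. Proof. by do 2 case. Qed.

HB.instance Definition _ := hasDecEq.Build vlabel (inj_eqAxiom vlabel_code_inj).

Definition vlabels := [:: U; X1; A1; B1; X2; A2; B2; X3; A3].

Lemma mem_vlabels i : i \in vlabels. Proof. by case: i. Qed.

(* [v] places the labelled vertices in the graph: u = v U carries the threads
   u x1 a1 b1 w1, u x2 a2 b2 w2 and u x3 a3 w3, whose ends w1, w2, w3 may coincide. *)
Record configuration (T : finType) (e : rel T) (v : vlabel -> T) (w1 w2 w3 : T) : Prop := {
  uniq_config : uniq (map v vlabels);
  w1_out : w1 \notin map v vlabels;
  w2_out : w2 \notin map v vlabels;
  w3_out : w3 \notin map v vlabels;
  nbrs_u : [set y | e (v U) y] = [set v X1; v X2; v X3];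
  nbrs_x1 : [set y | e (v X1) y] = [set v U; v A1];
  nbrs_x2 : [set y | e (v X2) y] = [set v U; v A2];
  nbrs_x3 : [set y | e (v X3) y] = [set v U; v A3];
  nbrs_a1 : [set y | e (v A1) y] = [set v X1; v B1];
  nbrs_a2 : [set y | e (v A2) y] = [set v X2; v B2];
  nbrs_b1 : [set y | e (v B1) y] = [set v A1; w1];
  nbrs_b2 : [set y | e (v B2) y] = [set v A2; w2];
  nbrs_a3 : [set y | e (v A3) y] = [set v X3; w3]
}.

Section Reduction.
Variables (T : finType) (e : rel T) (v : vlabel -> T) (w1 w2 w3 : T).
Hypotheses (sym_e : symmetric e) (irr_e : irreflexive e).
Hypothesis cfg : configuration e v w1 w2 w3.

Local Notation u := (v U).
Local Notation x1 := (v X1).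
Local Notation x2 := (v X2).
Local Notation x3 := (v X3).
Local Notation a1 := (v A1).
Local Notation a2 := (v A2).
Local Notation b1 := (v B1).
Local Notation b2 := (v B2).
Local Notation a3 := (v A3).

Let adj_sym x y : e x y -> e y x. Proof. by rewrite sym_e. Qed.

Lemma v_eq i j : (v i == v j) = (i == j).
Proof.
have vE k : v k = nth u (map v vlabels) (vlabel_code k) by case: k.
by rewrite (vE i) (vE j) nth_uniq ?size_map ?(uniq_config cfg) //; case: i; case: j.
Qed.

Lemma out_neq w : w \notin map v vlabels -> forall i, (w == v i) = false.
Proof. by move=> wo i; apply: contraNF wo => /eqP->; rewrite map_f ?mem_vlabels. Qed.

Lemma neq_out w : w \notin map v vlabels -> forall i, (v i == w) = false.
Proof. by move=> wo i; rewrite eq_sym out_neq. Qed.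

Definition distE := (v_eq, out_neq (w1_out cfg), out_neq (w2_out cfg), out_neq (w3_out cfg),
  neq_out (w1_out cfg), neq_out (w2_out cfg), neq_out (w3_out cfg)).

Definition inner : {set T} := [set u; x1; x2; x3; a1; a2].

Definition inner_label i := if i is (B1 | B2 | A3) then false else true.

Lemma inner_v i : (v i \in inner) = inner_label i.
Proof. by rewrite !inE !v_eq; case: i. Qed.

Lemma inner_out w : w \notin map v vlabels -> (w \in inner) = false.
Proof. by move=> wout; rewrite !inE !out_neq. Qed.

Definition innerE :=
  (inner_v, inner_out (w1_out cfg), inner_out (w2_out cfg), inner_out (w3_out cfg)).

Lemma adj_u y : e u y -> [|| y == x1, y == x2 | y == x3].
Proof. by rewrite (adj_nbrs _ (nbrs_u cfg)) !inE -orbA. Qed.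
Lemma adj_x1 y : e x1 y -> (y == u) || (y == a1).
Proof. by rewrite (adj_nbrs _ (nbrs_x1 cfg)) !inE. Qed.
Lemma adj_x2 y : e x2 y -> (y == u) || (y == a2).
Proof. by rewrite (adj_nbrs _ (nbrs_x2 cfg)) !inE. Qed.
Lemma adj_x3 y : e x3 y -> (y == u) || (y == a3).
Proof. by rewrite (adj_nbrs _ (nbrs_x3 cfg)) !inE. Qed.
Lemma adj_a1 y : e a1 y -> (y == x1) || (y == b1).
Proof. by rewrite (adj_nbrs _ (nbrs_a1 cfg)) !inE. Qed.
Lemma adj_a2 y : e a2 y -> (y == x2) || (y == b2).
Proof. by rewrite (adj_nbrs _ (nbrs_a2 cfg)) !inE. Qed.
Lemma adj_b1 y : e b1 y -> (y == a1) || (y == w1).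
Proof. by rewrite (adj_nbrs _ (nbrs_b1 cfg)) !inE. Qed.
Lemma adj_b2 y : e b2 y -> (y == a2) || (y == w2).
Proof. by rewrite (adj_nbrs _ (nbrs_b2 cfg)) !inE. Qed.
Lemma adj_a3 y : e a3 y -> (y == x3) || (y == w3).
Proof. by rewrite (adj_nbrs _ (nbrs_a3 cfg)) !inE. Qed.

Ltac nbr_cases exy :=
  first [ case/or3P: (adj_u exy) | case/orP: (adj_x1 exy) | case/orP: (adj_x2 exy)
        | case/orP: (adj_x3 exy) | case/orP: (adj_a1 exy) | case/orP: (adj_a2 exy)
        | case/orP: (adj_b1 exy) | case/orP: (adj_b2 exy) | case/orP: (adj_a3 exy) ].

Lemma inner_cases x : x \in inner -> [\/ x = u, x = x1, x = x2 | [\/ x = x3, x = a1 | x = a2]].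
Proof.
by rewrite !inE => /orP[/orP[/orP[/orP[/orP[]|]|]|]|] /eqP->;
  [constructor 1 | constructor 2 | constructor 3 | constructor 4; constructor ..].
Qed.

Lemma inner_boundary y x : e y x -> y \in inner -> x \notin inner ->
  [\/ y = a1 /\ x = b1, y = a2 /\ x = b2 | y = x3 /\ x = a3].
Proof.
move=> eyx /inner_cases[|||[||]] Ey; subst y; nbr_cases eyx;
  move=> /eqP->; rewrite ?innerE //; by [constructor 1 | constructor 2 | constructor 3].
Qed.

Definition reduced : rel T := fun x y => [&& e x y, x \notin inner & y \notin inner].

Lemma reduced_sub : subrel reduced e. Proof. by move=> x y /andP[]. Qed.

Lemma reducedE x y : e x y -> x \notin inner -> y \notin inner -> reduced x y.
Proof. by move=> exy xo yo; apply/and3P. Qed.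

Lemma reduced_simple : simple_graph reduced.
Proof.
split=> [x y|x]; rewrite /reduced /=; last by rewrite irr_e.
by rewrite sym_e (andbC (x \notin inner)).
Qed.

Lemma edges_reduced_proper : edges reduced \proper edges e.
Proof.
have eux1 : e u x1 by rewrite (adj_nbrs _ (nbrs_u cfg)) !inE eqxx.
by apply: (subrel_edges_proper reduced_sub eux1); rewrite /reduced innerE ?andbF.
Qed.

Lemma reduced_sym : symmetric reduced. Proof. by case: reduced_simple. Qed.

Lemma reduced_irr : irreflexive reduced. Proof. by case: reduced_simple. Qed.

Local Notation P1 := [set b1; w1].
Local Notation P2 := [set b2; w2].
Local Notation P3 := [set a3; w3].

Lemma reduced_b1_w1 : reduced b1 w1.
Proof. by rewrite reducedE ?innerE // (adj_nbrs _ (nbrs_b1 cfg)) !inE eqxx orbT. Qed.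
Lemma reduced_b2_w2 : reduced b2 w2.
Proof. by rewrite reducedE ?innerE // (adj_nbrs _ (nbrs_b2 cfg)) !inE eqxx orbT. Qed.
Lemma reduced_a3_w3 : reduced a3 w3.
Proof. by rewrite reducedE ?innerE // (adj_nbrs _ (nbrs_a3 cfg)) !inE eqxx orbT. Qed.

Lemma reduced_b1 y : reduced b1 y -> y = w1.
Proof. by case/and3P=> /adj_b1 /orP[] /eqP-> //; rewrite !innerE. Qed.
Lemma reduced_b2 y : reduced b2 y -> y = w2.
Proof. by case/and3P=> /adj_b2 /orP[] /eqP-> //; rewrite !innerE. Qed.
Lemma reduced_a3 y : reduced a3 y -> y = w3.
Proof. by case/and3P=> /adj_a3 /orP[] /eqP-> //; rewrite !innerE. Qed.

(* The colorings of P1, P2, P3 that [reduced_extends] cannot handle. *)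
Definition clash1 (c : {set T} -> color) :=
  [&& is1 (c P1), c P1 == c P2, is1 (c P3) & c P3 != c P1].

Definition clash2 (c : {set T} -> color) := [&& is2 (c P3), is2 (c P1) & c P1 != c P3].

Lemma resolve_clash2 c : good_coloring reduced c -> clash2 c ->
  exists2 c', good_coloring reduced c' & ~~ clash1 c' && ~~ clash2 c'.
Proof.
move=> cgood /and3P[i3 i1 n13]; set K := [pred f | connect (kempe2 reduced c) P3 f].
have K3 : P3 \in K by rewrite inE connect0.
have K1 : P1 \notin K.
  by apply: contra n13; rewrite inE => /(connect_kempe2_same reduced_sym cgood) ->.
exists (flip_on flip2 K c).
  apply: (flip2_good reduced_sym cgood) => y1 y2 z1 z2 g1 g2 j1 j2 near; rewrite !inE.
  exact: (kempe2_closed reduced_sym (c := c) P3 g1 g2 j1 j2 near).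
rewrite /clash1 /clash2 /flip_on K3 (negbTE K1).
by move: i1 i3 n13; rewrite /is2; case: (c P3); case: (c P1).
Qed.

Lemma resolve_clash1 c : good_coloring reduced c -> clash1 c ->
  exists2 c', good_coloring reduced c' & ~~ clash1 c' && ~~ clash2 c'.
Proof.
move=> cgood cl1; set K := [pred f | connect (kempe1 reduced c) P3 f].
have K3 : P3 \in K by rewrite inE connect0.
(* The 1a/1b chain of P3 is a path with leaves P1, P2, P3, so it misses P1 or P2. *)
have K12 : ~~ ((P1 \in K) && (P2 \in K)).
  have [n31 n32 n12] : [/\ P3 != P1, P3 != P2 & P1 != P2] by rewrite !eq_set2 !distE.
  apply/negP; rewrite !inE => /andP[H1 H2].
  apply: (three_leaves_disconnected (kempe1_sym reduced c) (kempe1_deg2 reduced_sym cgood)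
    _ _ _ _ _ _ H1 H2).
  - exact: (kempe1_leaf reduced_sym (c := c) cgood reduced_a3_w3 (@reduced_a3)).
  - exact: (kempe1_leaf reduced_sym (c := c) cgood reduced_b1_w1 (@reduced_b1)).
  - exact: (kempe1_leaf reduced_sym (c := c) cgood reduced_b2_w2 (@reduced_b2)).
  - exact: n31.
  - exact: n32.
  - exact: n12.
exists (flip_on flip1 K c).
  apply: (flip1_good cgood) => x y z gxy gxz yz j1 j2; rewrite !inE.
  exact: (kempe1_closed reduced_irr (c := c) P3 gxy gxz yz j1 j2).
move: cl1 K12; rewrite /clash1 /clash2 /flip_on K3 /is1 /is2.
by case: (P1 \in K); case: (P2 \in K); case: (c P1); case: (c P2); case: (c P3).
Qed.

Lemma clash_free_coloring c : good_coloring reduced c ->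
  exists2 c', good_coloring reduced c' & ~~ clash1 c' && ~~ clash2 c'.
Proof.
move=> cgood; have [/(resolve_clash2 cgood)//|n2] := boolP (clash2 c).
have [/(resolve_clash1 cgood)//|n1] := boolP (clash1 c).
by exists c; rewrite ?n1.
Qed.

(** * Extending a coloring of the reduced graph *)

Section Extension.
Variable c : {set T} -> color.
Hypothesis cgood : good_coloring reduced c.

(* The colors of u x_i, x_i a_i and a_i b_i.  A 2-colored spoke u x_i must not see the
   opposite 2-color on an edge joined to it by a path of length two (condition (II)); the
   edges concerned are P1 and P3 for x1, P2 and P3 for x2, and P3 and the edges at w3 for x3. *)
Variables cu1 cu2 cu3 cx1 ca1 cx2 ca2 cx3 : color.
Hypotheses (cx1_1 : is1 cx1) (ca1_1 : is1 ca1) (cx2_1 : is1 cx2) (ca2_1 : is1 ca2)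
  (cx3_1 : is1 cx3).
Hypotheses (cu12 : cu1 != cu2) (cu13 : cu1 != cu3) (cu23 : cu2 != cu3).
Hypotheses (cu12_2 : ~~ (is2 cu1 && is2 cu2)) (cu13_2 : ~~ (is2 cu1 && is2 cu3))
  (cu23_2 : ~~ (is2 cu2 && is2 cu3)).
Hypotheses (cu1_x1 : cu1 != cx1) (cx1_a1 : cx1 != ca1) (ca1_b1 : ca1 != c P1)
  (cu2_x2 : cu2 != cx2) (cx2_a2 : cx2 != ca2) (ca2_b2 : ca2 != c P2)
  (cu3_x3 : cu3 != cx3) (cx3_a3 : cx3 != c P3).
Hypotheses (far_u1 : is2 cu1 -> (c P1 != flip2 cu1) && (c P3 != flip2 cu1))
  (far_u2 : is2 cu2 -> (c P2 != flip2 cu2) && (c P3 != flip2 cu2))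
  (far_u3 : is2 cu3 ->
     is1 (c P3) && [forall y, reduced w3 y ==> (c [set w3; y] != flip2 cu3)]).

Definition ext_col (f : {set T}) : color :=
  if f \subset ~: inner then c f
  else if f == [set u; x1] then cu1 else if f == [set u; x2] then cu2
  else if f == [set u; x3] then cu3 else if f == [set x1; a1] then cx1
  else if f == [set a1; b1] then ca1 else if f == [set x2; a2] then cx2
  else if f == [set a2; b2] then ca2 else if f == [set x3; a3] then cx3 else c f.

Lemma ext_col_out x y : x \notin inner -> y \notin inner -> ext_col [set x; y] = c [set x; y].
Proof. by move=> xo yo; rewrite /ext_col subUset !sub1set !in_setC xo yo. Qed.

Local Ltac ext_col_eval := rewrite /ext_col subUset !sub1set !in_setC !inner_v !eq_set2 !distE.

Lemma ext_col_u_x1 : ext_col [set u; x1] = cu1. Proof. by ext_col_eval. Qed.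
Lemma ext_col_x1_u : ext_col [set x1; u] = cu1. Proof. by ext_col_eval. Qed.
Lemma ext_col_u_x2 : ext_col [set u; x2] = cu2. Proof. by ext_col_eval. Qed.
Lemma ext_col_x2_u : ext_col [set x2; u] = cu2. Proof. by ext_col_eval. Qed.
Lemma ext_col_u_x3 : ext_col [set u; x3] = cu3. Proof. by ext_col_eval. Qed.
Lemma ext_col_x3_u : ext_col [set x3; u] = cu3. Proof. by ext_col_eval. Qed.
Lemma ext_col_x1_a1 : ext_col [set x1; a1] = cx1. Proof. by ext_col_eval. Qed.
Lemma ext_col_a1_x1 : ext_col [set a1; x1] = cx1. Proof. by ext_col_eval. Qed.
Lemma ext_col_a1_b1 : ext_col [set a1; b1] = ca1. Proof. by ext_col_eval. Qed.
Lemma ext_col_b1_a1 : ext_col [set b1; a1] = ca1. Proof. by rewrite setUC ext_col_a1_b1. Qed.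
Lemma ext_col_x2_a2 : ext_col [set x2; a2] = cx2. Proof. by ext_col_eval. Qed.
Lemma ext_col_a2_x2 : ext_col [set a2; x2] = cx2. Proof. by ext_col_eval. Qed.
Lemma ext_col_a2_b2 : ext_col [set a2; b2] = ca2. Proof. by ext_col_eval. Qed.
Lemma ext_col_b2_a2 : ext_col [set b2; a2] = ca2. Proof. by rewrite setUC ext_col_a2_b2. Qed.
Lemma ext_col_x3_a3 : ext_col [set x3; a3] = cx3. Proof. by ext_col_eval. Qed.
Lemma ext_col_a3_x3 : ext_col [set a3; x3] = cx3. Proof. by rewrite setUC ext_col_x3_a3. Qed.

Definition ext_colE := (ext_col_u_x1, ext_col_x1_u, ext_col_u_x2, ext_col_x2_u, ext_col_u_x3,
  ext_col_x3_u, ext_col_x1_a1, ext_col_a1_x1, ext_col_a1_b1, ext_col_b1_a1, ext_col_x2_a2,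
  ext_col_a2_x2, ext_col_a2_b2, ext_col_b2_a2, ext_col_x3_a3, ext_col_a3_x3).

Ltac neq_absurd E :=
  match goal with
  | H : is_true (?a != ?a) |- _ => by rewrite eqxx in H
  | H : is_true (_ != _) |- _ => by move: H; rewrite E eqxx
  end.

Ltac is1_absurd H :=
  match goal with Hi : is_true (is1 _) |- _ => by rewrite (is1_is2F Hi) in H end.

Ltac opposite_absurd H1 H2 :=
  first [ by rewrite H1 in H2
        | match goal with H : is_true _ |- _ => by move: H; rewrite ?H1 ?H2 end ].

Lemma ext_matching k : is1 k -> is_matching_col e ext_col k.
Proof.
move=> k1; have m0 : is_matching_col reduced c k.
  by case: cgood => -[m1a m1b _ _] _ _; case/orP: k1 => /eqP->.
move=> x y z exy exz yz H1 H2.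
have [xi|xo] := boolP (x \in inner).
  case/inner_cases: xi exy exz yz H1 H2 => [|||[||]] -> exy exz yz H1 H2;
    nbr_cases exy; move=> /eqP Ey; nbr_cases exz; move=> /eqP Ez; subst y z;
    rewrite ?ext_colE in H1 H2; neq_absurd (etrans H1 (esym H2)).
have side y' z' : e x y' -> e x z' -> y' != z' -> y' \in inner ->
    ext_col [set x; y'] = k -> ext_col [set x; z'] = k -> False.
  move=> exy' exz' yz' yi H1' H2'.
  case: (inner_boundary (adj_sym exy') yi xo) => -[Ey Ex]; subst x y';
    nbr_cases exz'; move=> /eqP Ez; subst z'; rewrite ?ext_colE ?ext_col_out ?innerE // in H1' H2';
    neq_absurd (etrans H1' (esym H2')).
have [yi|yo] := boolP (y \in inner); first exact: side exy exz yz yi H1 H2.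
have [zi|zo] := boolP (z \in inner); first by apply: side exz exy _ zi H2 H1; rewrite eq_sym.
rewrite !ext_col_out // in H1 H2.
exact: m0 (reducedE exy xo yo) (reducedE exz xo zo) yz H1 H2.
Qed.

Definition spoke (f : {set T}) := [|| f == [set u; x1], f == [set u; x2] | f == [set u; x3]].

Lemma spoke_inner x y : spoke [set x; y] -> x \in inner.
Proof.
have xf : x \in [set x; y] by rewrite in_set2 eqxx.
by case/or3P=> /eqP E; move: xf; rewrite E in_set2 => /orP[] /eqP->; rewrite innerE.
Qed.

Lemma ext_col2_spoke x y : e x y -> is2 (ext_col [set x; y]) ->
  (x \in inner) || (y \in inner) -> spoke [set x; y].
Proof.
move=> exy c2 xyi; wlog xi : x y exy c2 {xyi} / x \in inner.
  move=> W; have [xi|xo] := boolP (x \in inner); first exact: W.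
  rewrite setUC; apply: W; rewrite 1?setUC //; first exact: adj_sym.
  by rewrite (negbTE xo) in xyi.
rewrite /spoke; case/inner_cases: xi exy c2 => [|||[||]] -> exy c2; nbr_cases exy;
  move=> /eqP Ey; subst y; rewrite !eq_set2 !distE //=; rewrite ext_colE in c2; is1_absurd c2.
Qed.

Lemma spoke_far p1 p2 q1 q2 : e p1 p2 -> e q1 q2 -> spoke [set p1; p2] ->
  q1 \notin inner -> q2 \notin inner -> e p1 q1 ->
  [/\ p1 = x3, [set p1; p2] = [set u; x3], q1 = a3 & q2 = w3].
Proof.
move=> ep eq sp q1o q2o epq; have p1i := spoke_inner sp.
case: (inner_boundary epq p1i q1o) => -[Ep1 Eq1]; subst p1 q1;
  move: sp; rewrite /spoke !eq_set2 !distE //= => /eqP Ep2; subst p2.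
by split=> //; [exact: setUC | exact: reduced_a3 (reducedE eq q1o q2o)].
Qed.

Lemma ext_induced k : is2 k -> is_induced_matching_col e ext_col k.
Proof.
move=> k2; have i0 : is_induced_matching_col reduced c k.
  by case: cgood => -[_ _ i2a i2b] _ _; case/orP: k2 => /eqP->.
have far p1 p2 q1 q2 : e p1 p2 -> e q1 q2 -> ext_col [set p1; p2] = k ->
    ext_col [set q1; q2] = k -> (p1 \in inner) || (p2 \in inner) ->
    q1 \notin inner -> q2 \notin inner -> e p1 q1 -> False.
  move=> ep eq Hp Hq pi q1o q2o epq.
  have sp := ext_col2_spoke ep (etrans (congr1 is2 Hp) k2) pi.
  case: (spoke_far ep eq sp q1o q2o epq) => _ Ep Eq1 Eq2; subst q1 q2.
  rewrite Ep ext_colE in Hp; rewrite ext_col_out ?innerE // in Hq.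
  by case/andP: (far_u3 (etrans (congr1 is2 Hp) k2)); rewrite Hq => /is1_is2F; rewrite k2.
move=> p1 p2 q1 q2 ep eq ne H1 H2.
have [pi|po] := boolP ((p1 \in inner) || (p2 \in inner)).
  have sp := ext_col2_spoke ep (etrans (congr1 is2 H1) k2) pi.
  have [qi|qo] := boolP ((q1 \in inner) || (q2 \in inner)).
    have sq := ext_col2_spoke eq (etrans (congr1 is2 H2) k2) qi.
    case/or3P: sp => /eqP Ep; case/or3P: sq => /eqP Eq; rewrite Ep Eq ?ext_colE in ne H1 H2;
      neq_absurd (etrans H1 (esym H2)).
  move: qo; rewrite negb_or => /andP[q1o q2o].
  split; first by apply: contraNneq q1o => <-; apply: spoke_inner sp.
  by apply/negP => epq; apply: far ep eq H1 H2 pi q1o q2o epq.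
move: po; rewrite negb_or => /andP[p1o p2o].
have [qi|qo] := boolP ((q1 \in inner) || (q2 \in inner)).
  have q1i := spoke_inner (ext_col2_spoke eq (etrans (congr1 is2 H2) k2) qi).
  split; first by apply: contraNneq p1o => ->.
  by apply/negP => epq; apply: far eq ep H2 H1 qi p1o p2o (adj_sym epq).
move: qo; rewrite negb_or => /andP[q1o q2o].
rewrite !ext_col_out // in H1 H2.
have [n1 n2] := i0 _ _ _ _ (reducedE ep p1o p2o) (reducedE eq q1o q2o) ne H1 H2.
by split=> //; apply: contra n2 => epq; apply: reducedE.
Qed.

Lemma ext_I x y z : e x y -> e x z -> ext_col [set x; y] = C2a -> ext_col [set x; z] <> C2b.
Proof.
move=> exy exz H1 H2.
have [xi|xo] := boolP (x \in inner).
  case/inner_cases: xi exy exz H1 H2 => [|||[||]] -> exy exz H1 H2;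
    nbr_cases exy; move=> /eqP Ey; nbr_cases exz; move=> /eqP Ez; subst y z;
    rewrite ?ext_colE in H1 H2; opposite_absurd H1 H2.
have [yi|yo] := boolP (y \in inner).
  by move: H1; case: (inner_boundary (adj_sym exy) yi xo) => -[-> ->];
    rewrite ext_colE => H1; opposite_absurd H1 H2.
have [zi|zo] := boolP (z \in inner).
  by move: H2; case: (inner_boundary (adj_sym exz) zi xo) => -[-> ->];
    rewrite ext_colE => H2; opposite_absurd H1 H2.
rewrite !ext_col_out // in H1 H2.
by case: cgood => _ hI _; apply: hI (reducedE exy xo yo) (reducedE exz xo zo) H1 H2.
Qed.

Lemma spoke_near p1 p2 q1 q2 w k : e p1 p2 -> e q1 q2 -> spoke [set p1; p2] ->
  ext_col [set p1; p2] = k -> is2 k -> q1 \notin inner -> q2 \notin inner ->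
  c [set q1; q2] = flip2 k -> e p1 w -> e w q1 -> False.
Proof.
move=> ep eq sp Hp k2 q1o q2o Hq e1 e2.
case/or3P: sp => /eqP /set2_eq_cases [[Ep1 Ep2]|[Ep1 Ep2]]; subst p1 p2;
  rewrite ext_colE in Hp; subst k; nbr_cases e1; move=> /eqP Ew; subst w;
  nbr_cases e2; move=> /eqP Eq1; subst q1; try by rewrite innerE in q1o.
all: have rq := reducedE eq q1o q2o.
- by rewrite (reduced_a3 rq) in Hq; case/andP: (far_u1 k2); rewrite Hq eqxx.
- by rewrite (reduced_b1 rq) in Hq; case/andP: (far_u1 k2); rewrite Hq eqxx.
- by rewrite (reduced_a3 rq) in Hq; case/andP: (far_u2 k2); rewrite Hq eqxx.
- by rewrite (reduced_b2 rq) in Hq; case/andP: (far_u2 k2); rewrite Hq eqxx.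
- rewrite (reduced_a3 rq) in Hq; case/andP: (far_u3 k2).
  by rewrite Hq => /is1_is2F; rewrite is2_flip2 k2.
- case/andP: (far_u3 k2) => _ /forallP/(_ q2)/implyP/(_ rq).
  by rewrite Hq eqxx.
Qed.

Lemma ext_II p1 p2 q1 q2 w : e p1 p2 -> e q1 q2 ->
  ext_col [set p1; p2] = C2a -> ext_col [set q1; q2] = C2b ->
  p1 != q1 -> p1 != q2 -> p2 != q1 -> p2 != q2 -> ~ (e p1 w /\ e w q1).
Proof.
move=> ep eq H1 H2 n11 n12 n21 n22 [e1 e2].
have [pi|po] := boolP ((p1 \in inner) || (p2 \in inner)).
  have sp := ext_col2_spoke ep (etrans (congr1 is2 H1) erefl) pi.
  have [qi|qo] := boolP ((q1 \in inner) || (q2 \in inner)).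
    have sq := ext_col2_spoke eq (etrans (congr1 is2 H2) erefl) qi.
    case/or3P: sp => /eqP Ep; case/or3P: sq => /eqP Eq;
      rewrite Ep Eq ?ext_colE in H1 H2; opposite_absurd H1 H2.
  move: qo; rewrite negb_or => /andP[q1o q2o]; rewrite (ext_col_out q1o q2o) in H2.
  exact: spoke_near ep eq sp H1 erefl q1o q2o H2 e1 e2.
move: po; rewrite negb_or => /andP[p1o p2o].
have [qi|qo] := boolP ((q1 \in inner) || (q2 \in inner)).
  have sq := ext_col2_spoke eq (etrans (congr1 is2 H2) erefl) qi.
  rewrite (ext_col_out p1o p2o) in H1.
  exact: spoke_near eq ep sq H2 erefl p1o p2o H1 (adj_sym e2) (adj_sym e1).
move: qo; rewrite negb_or => /andP[q1o q2o].
rewrite !ext_col_out // in H1 H2.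
have [wi|wo] := boolP (w \in inner).
  have [[Ew Ep1]|[Ew Ep1]|[Ew Ep1]] := inner_boundary (adj_sym e1) wi p1o;
  have [[Ew' Eq1]|[Ew' Eq1]|[Ew' Eq1]] := inner_boundary e2 wi q1o;
  move: Ew'; rewrite Ew => /eqP; rewrite v_eq /= // => _;
  by rewrite Ep1 Eq1 eqxx in n11.
case: cgood => _ _ hII.
apply: (hII _ _ _ _ w (reducedE ep p1o p2o) (reducedE eq q1o q2o) H1 H2 n11 n12 n21 n22).
by split; apply: reducedE.
Qed.

Lemma ext_good : good_coloring e ext_col.
Proof.
split; first split.
- exact: ext_matching.
- exact: ext_matching.
- exact: ext_induced.
- exact: ext_induced.
- exact: ext_I.
- exact: ext_II.
Qed.

End Extension.

Definition other1 (k : color) := if k == C1a then C1b else C1a.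

(* If P3 is 2-colored, u x1 takes its color; if P1 and P2 share a 1-color, then so does P3
   and u x1 takes C2a; otherwise u x3 takes a 2-color whose opposite is missing at w3. *)
Lemma reduced_extends c : good_coloring reduced c -> ~~ clash1 c -> ~~ clash2 c ->
  has_good_coloring e.
Proof.
move=> cgood n1 n2; move: n1 n2; rewrite /clash1 /clash2.
have [i3|i3] := boolP (is2 (c P3)).
  exists (ext_col c (c P3) (other1 (c P2)) (other1 (other1 (c P2))) (other1 (other1 (c P1)))
    (other1 (c P1)) (other1 (other1 (c P2))) (other1 (c P2)) (other1 (c P2))).
  apply: ext_good => //; move: n1 n2 i3;
  by rewrite /other1 /is1 /is2; case: (c P1); case: (c P2); case: (c P3).
have {}i3 : is1 (c P3) by move: i3; rewrite /is1 /is2; case: (c P3).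
have [e12|n12] := boolP ((c P1 == c P2) && is1 (c P1)).
  exists (ext_col c C2a (other1 (c P2)) (c P3) (other1 (other1 (c P1))) (other1 (c P1))
    (other1 (other1 (c P2))) (other1 (c P2)) (other1 (c P3))).
  apply: ext_good => //; move: n1 n2 i3 e12;
  by rewrite /other1 /is1 /is2; case: (c P1); case: (c P2); case: (c P3).
have [z z2 hz] := good_avoid2 w3 cgood.
pose cu1 := if is1 (c P1) then other1 (c P1) else other1 (other1 (c P2)).
pose cu2 := if is1 (c P1) then other1 (other1 (c P1)) else other1 (c P2).
exists (ext_col c cu1 cu2 z (other1 cu1) (other1 (other1 cu1)) (other1 cu2)
  (other1 (other1 cu2)) (other1 (c P3))).
apply: ext_good => //;
  try (by move=> _; rewrite i3; apply/forallP => y; apply/implyP; apply: hz);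
  clear hz; move: n1 n2 i3 n12 z2; rewrite /cu1 /cu2 /other1 /is1 /is2;
  by case: z; case: (c P1); case: (c P2); case: (c P3).
Qed.


Lemma reducible : has_good_coloring reduced -> has_good_coloring e.
Proof.
case=> c /clash_free_coloring[c' c'good /andP[n1 n2]].
exact: reduced_extends c'good n1 n2.
Qed.

End Reduction.

Lemma threads_configuration (T : finType) (e : rel T) u x1 x2 x3 :
  symmetric e -> deg e u = 3 -> x1 != x2 -> x3 != x1 -> x3 != x2 ->
  adj_thread e u 3 x1 -> adj_thread e u 3 x2 -> adj_thread e u 2 x3 ->
  exists v w1 w2 w3, configuration e v w1 w2 w3.
Proof.
move=> sym_e du x12 x31 x32.
move=> /adj_thread3[a1 [b1 [w1 th1]]] /adj_thread3[a2 [b2 [w2 th2]]] /adj_thread2[a3 [w3 th3]].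
have ux x p w : thread e u (x :: p) w -> e u x by case=> /andP[].
have [x13 x23] : x1 != x3 /\ x2 != x3 by rewrite !(eq_sym _ x3).
have uniq_threads := threads_uniq sym_e th1 th2 th3 x12 x13 x23.
exists (fun i => match i with
  | U => u | X1 => x1 | A1 => a1 | B1 => b1 | X2 => x2 | A2 => a2 | B2 => b2 | X3 => x3 | A3 => a3
  end), w1, w2, w3; split.
- exact: uniq_threads.
- exact: (thread_end_notin_threads th1 th1 th2 th3).
- exact: (thread_end_notin_threads th2 th1 th2 th3).
- exact: (thread_end_notin_threads th3 th1 th2 th3).
- exact: (deg3_nbrs du (ux _ _ _ th1) (ux _ _ _ th2) (ux _ _ _ th3) x12 x13 x23).
- exact: (thread_nbrs sym_e (p1 := [::]) th1).
- exact: (thread_nbrs sym_e (p1 := [::]) th2).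
- exact: (thread_nbrs sym_e (p1 := [::]) th3).
- exact: (thread_nbrs sym_e (p1 := [:: x1]) th1).
- exact: (thread_nbrs sym_e (p1 := [:: x2]) th2).
- exact: (thread_nbrs sym_e (p1 := [:: x1; a1]) th1).
- exact: (thread_nbrs sym_e (p1 := [:: x2; a2]) th2).
- exact: (thread_nbrs sym_e (p1 := [:: x3]) th3).
Qed.

Theorem lemma8 (T : finType) (e : rel T) :
  simple_graph e -> subcubic e -> (mad e < 20%:R / 9%:R)%R ->
  ~ has_good_coloring e ->
  (forall (T' : finType) (e' : rel T'),
     simple_graph e' -> subcubic e' -> (mad e' < 20%:R / 9%:R)%R ->
     #|T'| + #|edges e'| < #|T| + #|edges e| ->
     has_good_coloring e') ->
  forall u : T, deg e u = 3 ->
  forall x1 x2 : T, x1 != x2 ->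
  adj_thread e u 3 x1 -> adj_thread e u 3 x2 ->
  ~ (exists x3 : T, [/\ x3 != x1, x3 != x2 & adj_thread e u 2 x3]).
Proof.
move=> [sym_e irr_e] sc md ng mini u du x1 x2 x12 T1 T2 [x3 [x31 x32 T3]].
have [v [w1 [w2 [w3 cfg]]]] := threads_configuration sym_e du x12 x31 x32 T1 T2 T3.
apply/ng/(reducible sym_e irr_e cfg)/mini.
- exact: reduced_simple.
- exact: subrel_subcubic (@reduced_sub _ _ v) sc.
- exact: le_lt_trans (subrel_mad (@reduced_sub _ _ v)) md.
- by rewrite ltn_add2l proper_card ?(edges_reduced_proper cfg).
Qed.
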